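(* Let $L=\{a^nb^m : n,m\in\mathbb{N},\ m\ge n\}$ over the alphabet $\{a,b\}$. Then $L\in\mathrm{RH}_1$ and $L\notin\mathrm{RD}$, i.e. $L$ is recognised by some history-deterministic $1$-VASS under reachability acceptance but by no deterministic $k$-VASS (for any $k$) under reachability acceptance.
   Context: Fix a finite alphabet $\Sigma$. A $k$-dimensional vector addition system with states ($k$-VASS) is a tuple $(Q,q_0,F,\delta)$ where $Q$ is a finite set of states, $q_0\in Q$ is initial, $F\subseteq Q$ is the set of accepting states, and $\delta\subseteq Q\times\Sigma\times\mathbb{Z}^k\times Q$ is a finite set of transitions (no $\varepsilon$-transitions). A run on a word $w=a_1\cdots a_n$ is a sequence of transitions $(p_{i-1},a_i,d_i,p_i)$ with $p_0=q_0$ such that the counter vectors $v_0=\vec 0$, $v_i=v_{i-1}+d_i$ all lie in $\mathbb{N}^k$. Under reachability acceptance the run is accepting if $p_n\in F$ and $v_n=\vec 0$. The language is the set of words having an accepting run. A VASS is deterministic if for every state $q$ and letter $a$ there is at most one transition $(q,a,d,q')$. A VASS is history-deterministic if there is a resolver, i.e. a function $r$ mapping each finite sequence of transitions and each letter $a$ to a transition labelled $a$, such that for every word $w$ in the language, the sequence of transitions obtained by successively applying $r$ to the letters of $w$ is a run on $w$ (counters stay nonnegative) and is accepting. $\mathrm{RD}_k$ (resp. $\mathrm{RH}_k$) is the class of languages recognised by deterministic (resp. history-deterministic) $k$-VASS under reachability acceptance, and $\mathrm{RD}=\bigcup_{k\ge1}\mathrm{RD}_k$. *)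

From Stdlib Require Import List ZArith Arith.
Import ListNotations.
Open Scope Z_scope.

Inductive letter : Type := la | lb.

Definition letter_eq_dec (x y : letter) : {x = y} + {x <> y}.
Proof. decide equality. Defined.

(* A k-VASS over {a,b}: states are natural numbers (Q is the finite set of
   states occurring in q0, F, delta); delta is a finite list of transitions
   (p, a, d, q) with d in Z^k represented as a list of length k. *)
Record VASS (k : nat) : Type := mkVASS {
  q0 : nat;
  F : list nat;
  delta : list (nat * letter * list Z * nat);
  delta_dim : forall t, In t delta -> length (snd (fst t)) = k
}.
Arguments q0 {k}. Arguments F {k}. Arguments delta {k}.

Definition trans : Type := (nat * letter * list Z * nat)%type.
Definition t_src (t : trans) : nat := fst (fst (fst t)).
Definition t_lab (t : trans) : letter := snd (fst (fst t)).
Definition t_upd (t : trans) : list Z := snd (fst t).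
Definition t_tgt (t : trans) : nat := snd t.

Definition vadd (v d : list Z) : list Z := map (fun p => fst p + snd p) (combine v d).
Definition zero_vec (k : nat) : list Z := repeat 0 k.
Definition nonneg (v : list Z) : Prop := Forall (fun x => 0 <= x) v.

Inductive run_from {k} (V : VASS k) : nat -> list Z -> list letter -> list trans -> nat -> list Z -> Prop :=
| run_nil : forall p v, run_from V p v [] [] p v
| run_cons : forall p v a w t ts q v',
    In t (delta V) -> t_src t = p -> t_lab t = a ->
    nonneg (vadd v (t_upd t)) ->
    run_from V (t_tgt t) (vadd v (t_upd t)) w ts q v' ->
    run_from V p v (a :: w) (t :: ts) q v'.

Definition accepting_run {k} (V : VASS k) (w : list letter) (ts : list trans) : Prop :=
  exists q, run_from V (q0 V) (zero_vec k) w ts q (zero_vec k) /\ In q (F V).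

Definition lang {k} (V : VASS k) (w : list letter) : Prop :=
  exists ts, accepting_run V w ts.

Definition deterministic {k} (V : VASS k) : Prop :=
  forall t t', In t (delta V) -> In t' (delta V) ->
    t_src t = t_src t' -> t_lab t = t_lab t' -> t = t'.

Definition resolver_ok {k} (V : VASS k) (r : list trans -> letter -> trans) : Prop :=
  forall h a, In (r h a) (delta V) /\ t_lab (r h a) = a.

Fixpoint res_run (r : list trans -> letter -> trans) (h : list trans) (w : list letter) : list trans :=
  match w with
  | [] => []
  | a :: w' => let t := r h a in t :: res_run r (h ++ [t]) w'
  end.

Definition history_deterministic {k} (V : VASS k) : Prop :=
  exists r, resolver_ok V r /\
    forall w, lang V w -> accepting_run V w (res_run r [] w).

Definition RD_k (k : nat) (L : list letter -> Prop) : Prop :=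
  exists V : VASS k, deterministic V /\ forall w, lang V w <-> L w.
Definition RH_k (k : nat) (L : list letter -> Prop) : Prop :=
  exists V : VASS k, history_deterministic V /\ forall w, lang V w <-> L w.
Definition RD (L : list letter -> Prop) : Prop := exists k, (1 <= k)%nat /\ RD_k k L.

Definition L_ab (w : list letter) : Prop :=
  exists n m : nat, (n <= m)%nat /\ w = repeat la n ++ repeat lb m.

From Stdlib Require Import List ZArith Lia ClassicalEpsilon.
Import ListNotations.
Open Scope Z_scope.

(* Membership in RH_1: a 1-VASS counts the a's and, on each b, may decrement or
   not.  Its resolver decrements greedily while the counter is positive, which
   is safe because an accepting run needs exactly n decrements among the
   m >= n letters b.

   Non-membership in RD: if a deterministic VASS accepts a^n b^j for all
   j >= n, its unique run on a^n b^omega is, by pigeonhole on its transitions,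
   periodic from some i with period P, where i + P <= |delta| < n.  Every
   transition taken after i recurs beyond n, where the counters are zero
   before and after it, so it has zero effect; hence a^n b^(i+P) is accepted
   as well, although i + P < n. *)

Lemma pigeonhole {A : Type} (l : list A) (f : nat -> A) :
  (forall j, (j <= length l)%nat -> In (f j) l) ->
  exists i j, (i < j <= length l)%nat /\ f i = f j.
Proof.
  intros Hf. apply NNPP; intros Hno.
  assert (Hnd : NoDup (map f (seq 0 (S (length l))))).
  { apply (NoDup_nth _ (f 0%nat)). rewrite length_map, length_seq.
    intros i j Hi Hj. rewrite !map_nth, !seq_nth by lia. intros Hij.
    destruct (Nat.lt_total i j) as [Hlt | [Heq | Hgt]]; [| exact Heq |];
      exfalso; apply Hno; eauto 6 with arith. }
  apply NoDup_incl_length with (l' := l) in Hnd.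
  - rewrite length_map, length_seq in Hnd. lia.
  - intros x (j & <- & Hj)%in_map_iff. apply in_seq in Hj. apply Hf. lia.
Qed.

Lemma vadd_zero_vec_l (u : list Z) : vadd (zero_vec (length u)) u = u.
Proof. induction u as [|x u IH]; [reflexivity|]. exact (f_equal (cons x) IH). Qed.

Lemma vadd_zero_vec_r (v : list Z) : vadd v (zero_vec (length v)) = v.
Proof.
  induction v as [|x v IH]; [reflexivity|].
  unfold vadd in *; cbn. rewrite Z.add_0_r. exact (f_equal (cons x) IH).
Qed.

Section Runs.

Variables (k : nat) (V : VASS k).

Lemma run_from_app p v w1 w2 ts1 ts2 q1 v1 q v' :
  run_from V p v w1 ts1 q1 v1 -> run_from V q1 v1 w2 ts2 q v' ->
  run_from V p v (w1 ++ w2) (ts1 ++ ts2) q v'.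
Proof. induction 1; intros; simpl; [assumption | econstructor; eauto]. Qed.

Lemma run_from_app_inv p v w1 w2 ts q v' :
  run_from V p v (w1 ++ w2) ts q v' ->
  exists ts1 ts2 q1 v1, run_from V p v w1 ts1 q1 v1 /\ run_from V q1 v1 w2 ts2 q v'.
Proof.
  revert p v ts. induction w1 as [|b w1 IH]; intros p v ts Hrun.
  - exists [], ts, p, v. split; [constructor | exact Hrun].
  - inversion Hrun as [|? ? ? ? t ts' ? ? Hin Hsrc Hlab Hnn Hrest]; subst.
    destruct (IH _ _ _ Hrest) as (ts1 & ts2 & q1 & v1 & H1 & H2).
    exists (t :: ts1), ts2, q1, v1. split; [econstructor; eauto | exact H2].
Qed.

Lemma run_from_singleton_inv p v a ts q v' :
  run_from V p v [a] ts q v' ->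
  exists t, In t (delta V) /\ t_src t = p /\ t_lab t = a /\
    q = t_tgt t /\ v' = vadd v (t_upd t).
Proof.
  intros Hrun. inversion Hrun as [|? ? ? ? t ? ? ? Hin Hsrc Hlab _ Hrest]; subst.
  inversion Hrest; subst. eauto 6.
Qed.

Lemma run_from_length p v w ts q v' :
  run_from V p v w ts q v' -> length v = k -> length v' = k.
Proof.
  induction 1 as [|p v a w t ts q v' Hin _ _ _ _ IH]; intros Hv; [exact Hv|].
  apply IH. unfold vadd. rewrite length_map, length_combine.
  pose proof (delta_dim _ V t Hin). unfold t_upd. lia.
Qed.

Hypothesis Hdet : deterministic V.

Lemma run_from_det p v w ts q v' ts' q' v'' :
  run_from V p v w ts q v' -> run_from V p v w ts' q' v'' -> q = q' /\ v' = v''.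
Proof.
  intros Hrun. revert ts' q' v''.
  induction Hrun; intros ts' q' v'' Hrun'; inversion Hrun'; subst; [auto|].
  match goal with Ht' : In ?t' (delta V) |- _ =>
    assert (t = t') by (apply Hdet; auto; congruence) end.
  subst. eauto.
Qed.

Lemma det_chain_periodic (a : letter) (tr : nat -> trans) :
  (forall j, In (tr j) (delta V)) -> (forall j, t_lab (tr j) = a) ->
  (forall j, t_src (tr (S j)) = t_tgt (tr j)) ->
  exists i P, (0 < P)%nat /\ (i + P <= length (delta V))%nat /\
    forall j c, (i <= j)%nat -> tr (j + c * P)%nat = tr j.
Proof.
  intros Hin Hlab Hchain.
  destruct (pigeonhole (delta V) tr (fun j _ => Hin j)) as (i & i' & Hii' & Heq).
  exists i, (i' - i)%nat. split; [lia|]. split; [lia|].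
  assert (Hshift : forall m, tr (i + m + (i' - i))%nat = tr (i + m)%nat).
  { induction m as [|m IH].
    - rewrite Nat.add_0_r. replace (i + (i' - i))%nat with i' by lia. congruence.
    - replace (i + S m + (i' - i))%nat with (S (i + m + (i' - i))) by lia.
      replace (i + S m)%nat with (S (i + m)) by lia.
      apply Hdet; auto; [now rewrite !Hchain, IH | congruence]. }
  intros j c Hj. induction c as [|c IH]; [f_equal; lia|].
  replace (j + S c * (i' - i))%nat with (i + (j + c * (i' - i) - i) + (i' - i))%nat by lia.
  rewrite Hshift. rewrite <- IH. f_equal. lia.
Qed.

Section RepeatedSuffix.

Variables (u : list letter) (a : letter) (N : nat).
Hypothesis Hacc : forall j, (N <= j)%nat -> lang V (u ++ repeat a j).

Definition reach (j : nat) (c : nat * list Z) : Prop :=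
  exists ts, run_from V (q0 V) (zero_vec k) (u ++ repeat a j) ts (fst c) (snd c).

Lemma reach_total j : exists c, reach j c.
Proof.
  destruct (Hacc (j + N)) as (ts & q & Hrun & _); [lia|].
  rewrite repeat_app, app_assoc in Hrun.
  destruct (run_from_app_inv _ _ _ _ _ _ _ Hrun) as (ts1 & _ & q1 & v1 & H1 & _).
  exists (q1, v1), ts1. exact H1.
Qed.

Lemma reach_unique j c c' : reach j c -> reach j c' -> c = c'.
Proof.
  intros [ts H] [ts' H']. destruct (run_from_det _ _ _ _ _ _ _ _ _ H H').
  destruct c, c'; simpl in *; congruence.
Qed.

Lemma reach_final j c :
  (N <= j)%nat -> reach j c -> In (fst c) (F V) /\ snd c = zero_vec k.
Proof.
  intros Hj Hc. destruct (Hacc j Hj) as (ts & q & Hrun & Hq).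
  assert (Hqc : reach j (q, zero_vec k)) by (exists ts; exact Hrun).
  rewrite (reach_unique _ _ _ Hc Hqc). auto.
Qed.

Lemma reach_length j c : reach j c -> length (snd c) = k.
Proof. intros [ts H]. exact (run_from_length _ _ _ _ _ _ H (repeat_length _ _)). Qed.

Lemma reach_succ j c c' : reach j c -> reach (S j) c' ->
  exists t, In t (delta V) /\ t_src t = fst c /\ t_lab t = a /\
    fst c' = t_tgt t /\ snd c' = vadd (snd c) (t_upd t).
Proof.
  intros Hc [ts H]. rewrite <- Nat.add_1_r, repeat_app, app_assoc in H.
  destruct (run_from_app_inv _ _ _ _ _ _ _ H) as (ts1 & ts2 & q1 & v1 & H1 & H2).
  rewrite (reach_unique j c (q1, v1) Hc (ex_intro _ ts1 H1)).
  exact (run_from_singleton_inv _ _ _ _ _ _ H2).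
Qed.

Lemma det_accepts_short_repeat :
  exists j, (j <= length (delta V))%nat /\ lang V (u ++ repeat a j).
Proof.
  destruct (choice reach reach_total) as [conf Hconf].
  destruct (choice (fun j t => In t (delta V) /\ t_src t = fst (conf j) /\ t_lab t = a /\
      fst (conf (S j)) = t_tgt t /\ snd (conf (S j)) = vadd (snd (conf j)) (t_upd t)))
    as [tr Htr].
  { intros j. apply (reach_succ j); apply Hconf. }
  destruct (det_chain_periodic a tr) as (i & P & HP & HiP & Hper);
    try (intros j; apply Htr).
  { intros j. destruct (Htr (S j)) as (_ & -> & _). apply Htr. }
  assert (Hzero : forall j, (i <= j)%nat -> t_upd (tr j) = zero_vec k).
  { intros j Hj. rewrite <- (Hper j N Hj).
    set (J := (j + N * P)%nat).
    destruct (Htr J) as (HJ & _ & _ & _ & Hstep).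
    rewrite (proj2 (reach_final J _ ltac:(nia) (Hconf J))),
            (proj2 (reach_final (S J) _ ltac:(nia) (Hconf (S J)))) in Hstep.
    rewrite <- (delta_dim _ V _ HJ), vadd_zero_vec_l, (delta_dim _ V _ HJ) in Hstep.
    symmetry. exact Hstep. }
  assert (Hconst : forall m, snd (conf (i + m)%nat) = snd (conf i)).
  { induction m as [|m IH]; [now rewrite Nat.add_0_r|].
    rewrite Nat.add_succ_r. destruct (Htr (i + m)%nat) as (_ & _ & _ & _ & ->).
    rewrite Hzero by lia. rewrite <- (reach_length _ _ (Hconf (i + m)%nat)).
    rewrite vadd_zero_vec_r. exact IH. }
  exists (i + P)%nat. split; [exact HiP|].
  destruct (Hconf (i + P)%nat) as [ts Hrun].
  exists ts, (fst (conf (i + P)%nat)). split.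
  - rewrite Hconst, <- (Hconst N) in Hrun.
    rewrite (proj2 (reach_final (i + N) _ ltac:(lia) (Hconf _))) in Hrun. exact Hrun.
  - destruct (Htr (i + P)%nat) as (_ & <- & _).
    rewrite <- (Hper (i + P)%nat N) by lia.
    destruct (Htr (i + P + N * P)%nat) as (_ & -> & _).
    apply (reach_final (i + P + N * P) _ ltac:(nia) (Hconf _)).
Qed.

End RepeatedSuffix.

End Runs.

Lemma L_ab_repeat_le n m : L_ab (repeat la n ++ repeat lb m) -> (n <= m)%nat.
Proof.
  intros (n' & m' & Hle & Hw).
  assert (Hcount : forall x, count_occ letter_eq_dec (repeat la n ++ repeat lb m) x
                           = count_occ letter_eq_dec (repeat la n' ++ repeat lb m') x)
    by now rewrite Hw.
  pose proof (Hcount la) as Ha. pose proof (Hcount lb) as Hb.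
  rewrite !count_occ_app in Ha, Hb.
  rewrite !(@count_occ_repeat_eq _ _ la la), !(@count_occ_repeat_neq _ _ la lb) in Ha
    by easy.
  rewrite !(@count_occ_repeat_eq _ _ lb lb), !(@count_occ_repeat_neq _ _ lb la) in Hb
    by easy.
  lia.
Qed.

Lemma L_ab_not_RD_k k : ~ RD_k k L_ab.
Proof.
  intros (V & Hdet & HV).
  set (n := S (length (delta V))).
  destruct (det_accepts_short_repeat k V Hdet (repeat la n) lb n) as (j & Hj & Hlang).
  { intros j Hj. apply HV. exists n, j. auto. }
  apply HV, L_ab_repeat_le in Hlang. lia.
Qed.

Definition tA : trans := (0%nat, la, [1], 0%nat).
Definition tB (p : nat) (d : Z) : trans := (p, lb, [d], 1%nat).
Definition delta1 : list trans := [tA; tB 0 (-1); tB 0 0; tB 1 (-1); tB 1 0].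

Lemma delta1_dim t : In t delta1 -> length (snd (fst t)) = 1%nat.
Proof. intros Ht. repeat destruct Ht as [<- | Ht]; easy. Qed.

Definition V1 : VASS 1 := mkVASS 1 0%nat [0%nat; 1%nat] delta1 delta1_dim.

Definition hist_state (h : list trans) : nat := last (map t_tgt h) 0%nat.
Definition hist_counter (h : list trans) : Z :=
  fold_right (fun t c => hd 0 (t_upd t) + c) 0 h.

(* The source state is clamped to {0, 1} so that the chosen transition lies in
   [delta1] even for histories that are not runs of [V1]. *)
Definition res1 (h : list trans) (a : letter) : trans :=
  match a with
  | la => tA
  | lb => tB (if (hist_state h =? 0)%nat then 0%nat else 1%nat)
             (if 0 <? hist_counter h then -1 else 0)
  end.

Lemma res1_ok : resolver_ok V1 res1.
Proof.
  intros h [|]; split; try reflexivity; simpl; [now left|].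
  destruct (hist_state h =? 0)%nat, (0 <? hist_counter h); auto 6.
Qed.

Lemma res_run_app r h w1 w2 :
  res_run r h (w1 ++ w2) = res_run r h w1 ++ res_run r (h ++ res_run r h w1) w2.
Proof.
  revert h. induction w1 as [|a w1 IH]; intros h; simpl.
  - now rewrite app_nil_r.
  - now rewrite IH, <- app_assoc.
Qed.

Lemma res1_run_repeat_la h n : res_run res1 h (repeat la n) = repeat tA n.
Proof. revert h. induction n as [|n IH]; intros h; simpl; now rewrite ?IH. Qed.

Lemma hist_state_snoc h t : hist_state (h ++ [t]) = t_tgt t.
Proof. unfold hist_state. rewrite map_app. apply last_last. Qed.

Lemma hist_state_repeat_tA n : hist_state (repeat tA n) = 0%nat.
Proof. induction n as [|[|n] IH]; auto. Qed.

Lemma hist_counter_snoc h t : hist_counter (h ++ [t]) = hist_counter h + hd 0 (t_upd t).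
Proof. unfold hist_counter. rewrite fold_right_app. simpl. induction h; simpl; lia. Qed.


Lemma hist_counter_repeat_tA n : hist_counter (repeat tA n) = Z.of_nat n.
Proof.
  induction n as [|n IH]; [reflexivity|].
  unfold hist_counter in *. cbn [repeat fold_right]. rewrite IH.
  change (hd 0 (t_upd tA)) with 1. lia.
Qed.

Lemma V1_run_repeat_la n c : 0 <= c ->
  run_from V1 0 [c] (repeat la n) (repeat tA n) 0 [c + Z.of_nat n].
Proof.
  revert c. induction n as [|n IH]; intros c Hc.
  - rewrite Z.add_0_r. constructor.
  - rewrite Nat2Z.inj_succ, <- Z.add_1_l, Z.add_assoc.
    apply run_cons; simpl; auto.
    + repeat constructor. simpl. lia.
    + apply IH. lia.
Qed.

Lemma res1_run_repeat_lb m h c :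
  In (hist_state h) (F V1) -> hist_counter h = c -> 0 <= c <= Z.of_nat m ->
  exists q, In q (F V1) /\
    run_from V1 (hist_state h) [c] (repeat lb m) (res_run res1 h (repeat lb m)) q [0].
Proof.
  revert h c. induction m as [|m IH]; intros h c Hh Hc Hcm.
  - exists (hist_state h). replace c with 0 by lia. split; [exact Hh | constructor].
  - set (d := if 0 <? c then -1 else 0).
    assert (Hd : 0 <= c + d <= Z.of_nat m) by (unfold d; destruct (Z.ltb_spec 0 c); lia).
    assert (Hres : res1 h lb = tB (hist_state h) d).
    { unfold res1, d. rewrite Hc. destruct Hh as [<- | [<- | []]]; reflexivity. }
    destruct (IH (h ++ [tB (hist_state h) d]) (c + d)) as (q & Hq & Hrun).
    + rewrite hist_state_snoc. simpl. auto.
    + now rewrite hist_counter_snoc, Hc.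
    + exact Hd.
    + exists q. split; [exact Hq|].
      cbn [repeat res_run]. rewrite Hres. rewrite hist_state_snoc in Hrun.
      apply run_cons; auto.
      * rewrite <- Hres. apply res1_ok.
      * repeat constructor. simpl. lia.
Qed.


Lemma res1_accepts w : L_ab w -> accepting_run V1 w (res_run res1 [] w).
Proof.
  intros (n & m & Hnm & ->).
  rewrite res_run_app, res1_run_repeat_la.
  destruct (res1_run_repeat_lb m (repeat tA n) (Z.of_nat n)) as (q & Hq & Hrun).
  - rewrite hist_state_repeat_tA. simpl. auto.
  - apply hist_counter_repeat_tA.
  - lia.
  - exists q. split; [|exact Hq].
    rewrite hist_state_repeat_tA in Hrun.
    exact (run_from_app _ _ _ _ _ _ _ _ _ _ _ _ (V1_run_repeat_la n 0 (Z.le_refl 0)) Hrun).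
Qed.

(* Every [b] lowers the counter by at most one, and after a [b] the run is in
   state 1, which has no [a]-transition. *)
Lemma V1_run_shape p v w ts q v' : run_from V1 p v w ts q v' -> forall c, v = [c] ->
  exists n m c', w = repeat la n ++ repeat lb m /\ (p <> 0 -> n = 0)%nat /\
    v' = [c'] /\ c + Z.of_nat n - Z.of_nat m <= c'.
Proof.
  induction 1 as [p v | p v a w t ts q v' Ht Hsrc Hlab _ _ IH]; intros c ->.
  - exists 0%nat, 0%nat, c. repeat split; auto. lia.
  - subst p a. repeat destruct Ht as [<- | Ht]; try destruct Ht;
      destruct (IH _ eq_refl) as (n & m & c' & -> & Hn & -> & Hc').
    all: cbn in Hn, Hc' |- *.
    { exists (S n), m, c'. repeat split; [now intros [] | lia]. }
    all: rewrite Hn by discriminate.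
    all: exists 0%nat, (S m), c'; repeat split; auto; lia.
Qed.

Lemma lang_V1 w : lang V1 w <-> L_ab w.
Proof.
  split.
  - intros (ts & q & Hrun & _).
    destruct (V1_run_shape _ _ _ _ _ _ Hrun 0 eq_refl) as (n & m & c' & -> & _ & Hc & Hle).
    injection Hc as <-. exists n, m. split; [lia | reflexivity].
  - intros Hw. exists (res_run res1 [] w). now apply res1_accepts.
Qed.

Theorem mainTheorem3 : RH_k 1 L_ab /\ ~ RD L_ab.
Proof.
  split.
  - exists V1. split; [|exact lang_V1].
    exists res1. split; [exact res1_ok|].
    intros w Hw. now apply res1_accepts, lang_V1.
  - intros (k & _ & HRD). exact (L_ab_not_RD_k k HRD).
Qed.
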